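(* Let $H$ be a finite group, $p$ a prime, and $S$ a Sylow $p$-subgroup of $H$. If $Z(S) \leq O_{p',p}(H)$, then $Z(S)$ splits over $W_H(S)$, i.e., there is a subgroup $K \leq Z(S)$ with $Z(S) = W_H(S) \times K$.
   Context: For a finite group $G$ with Sylow $p$-subgroup $S$, an element $x \in S$ is weakly closed in $S$ with respect to $G$ if $x^g = x$ whenever $g \in G$ and $x^g := g^{-1}xg \in S$. $W_G(S)$ denotes the subgroup of all elements of $S$ that are weakly closed in $S$ with respect to $G$. $O_{p'}(H)$ is the largest normal $p'$-subgroup of $H$, and $O_{p',p}(H)$ is the normal subgroup of $H$ containing $O_{p'}(H)$ with $O_{p',p}(H)/O_{p'}(H) = O_p(H/O_{p'}(H))$, where $O_p$ denotes the largest normal $p$-subgroup. *)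

From mathcomp Require Import all_boot all_fingroup all_solvable.
Set Implicit Arguments.
Unset Strict Implicit.
Unset Printing Implicit Defensive.
Local Open Scope group_scope.

(* W_G(S): elements of S weakly closed in S with respect to G.
   x^g is MathComp's conjugation g^-1 x g, matching the paper. *)
Definition weakly_closed_elts (gT : finGroupType) (G S : {set gT}) : {set gT} :=
  [set x in S | [forall g in G, (x ^ g \in S) ==> (x ^ g == x)]].

From mathcomp Require Import all_boot all_fingroup all_solvable.
From mathcomp Require Import ssralg.
Local Open Scope group_scope.
Import GRing.Theory FiniteModule.

(* Let N = O_p'(H) and write bars for images in H/N.  As S meets N
   trivially, Z(S) maps isomorphically onto Z(S bar), which the hypothesis
   puts inside the abelian p-group A = Z(O_p(H bar)).  An element x of Z(S)
   is weakly closed iff x bar is central in H bar: if x^g lies in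
   O_{p',p}(H) <= NS, Sylow's theorem in NS moves x^g back into S by an
   element of NS, and such elements fix x modulo N.  So W_H(S) corresponds to
   C_A(H bar), and C_A(H bar) <= Z(S bar) <= C_A(S bar).  The relative norm
   x |-> prod_{S bar g} x^g maps C_A(S bar) into C_A(H bar) and is the
   |H bar : S bar|-th power on C_A(H bar), an automorphism since that index
   is prime to p; its kernel in Z(S bar) is therefore a complement. *)

Lemma conjg_cent {gT : finGroupType} {X : {set gT}} {x y : gT} :
  x \in 'C(X) -> y \in X -> x ^ y = x.
Proof. by move=> /centP cXx Xy; apply/conjg_fixP/commgP; rewrite /commute cXx. Qed.

Section RelativeNorm.

Variables (gT : finGroupType) (A G P : {group gT}).
Hypotheses (abA : abelian A) (nAG : G \subset 'N(A)) (sPG : P \subset G).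

Definition rel_norm x :=
  fmval (\sum_(C in rcosets P G) fmod abA x ^@ repr C)%R.

Let nAg g : g \in G -> g \in 'N(A). Proof. exact: subsetP nAG g. Qed.

Let rcoset_sub {a g} : g \in G -> a \in P :* g -> a \in G.
Proof. by move=> Gg /rcosetP[y Py ->]; rewrite groupM // (subsetP sPG). Qed.

Let actr_rcoset {u : fmod_of abA} {a g} :
  {in P, forall y, u ^@ y = u}%R -> g \in G -> a \in P :* g -> (u ^@ a = u ^@ g)%R.
Proof.
move=> cPu Gg /rcosetP[y Py ->]; have Gy := subsetP sPG y Py.
by rewrite actrM ?nAg // cPu.
Qed.

Lemma rel_normM : {in A &, {morph rel_norm : x y / x * y}}.
Proof.
move=> x y Ax Ay; rewrite /rel_norm fmodM // -fmvalA -big_split /=.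
by congr fmval; apply: eq_bigr => C _; apply: actAr.
Qed.

Lemma rel_norm_cent x : x \in 'C_A(P) -> rel_norm x \in 'C_A(G).
Proof.
case/setIP=> Ax cPx; set u := fmod abA x.
have cPu : {in P, forall y, u ^@ y = u}%R.
  by move=> y Py; rewrite -fmodJ ?nAg ?(subsetP sPG) // (conjg_cent cPx).
rewrite inE fmodP; apply/centP=> g Gg; apply/commgP/conjg_fixP.
rewrite /rel_norm -fmvalJ ?nAg // actr_sum.
rewrite [in RHS](reindex_acts 'Rs (actsRs_rcosets P G) Gg) /=.
congr fmval; apply: eq_bigr => _ /rcosetsP[y Gy ->] /=.
have Gyg : y * g \in G by rewrite groupM.
rewrite -actrM ?nAg ?(rcoset_sub Gy (mem_repr_rcoset P y)) //.
rewrite rcosetE -rcosetM (actr_rcoset cPu Gyg (mem_repr_rcoset P _)).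
apply: actr_rcoset cPu Gyg _.
by case: repr_rcosetP => z Pz; rewrite -mulgA mem_rcoset mulgK.
Qed.

Lemma rel_norm_cent_id x : x \in 'C_A(G) -> rel_norm x = x ^+ #|G : P|.
Proof.
case/setIP=> Ax cGx; rewrite /rel_norm (eq_bigr (fun _ => fmod abA x)).
  by rewrite sumr_const fmvalZ fmodK.
move=> _ /rcosetsP[g Gg ->]; have Gr := rcoset_sub Gg (mem_repr_rcoset P g).
by rewrite -fmodJ ?nAg // (conjg_cent cGx).
Qed.

End RelativeNorm.

Arguments rel_normM {gT A} G P abA.
Arguments rel_norm_cent {gT A G P} abA nAG sPG x.
Arguments rel_norm_cent_id {gT A G P} abA nAG sPG x.

Lemma power_retraction_dprod (gT : finGroupType) (D W B : {group gT})
    (f : {morphism D >-> gT}) n :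
  abelian B -> W \subset B -> B \subset D -> f @* B \subset W ->
  {in W, forall x, f x = x ^+ n} -> coprime #|W| n ->
  W \x 'ker_B f = B.
Proof.
move=> abB sWB sBD sfBW fW coWn.
have sWD := subset_trans sWB sBD; have rootK := expgK coWn.
have cWK : 'ker_B f \subset 'C(W) by rewrite subIset ?(subset_trans abB (centS sWB)).
have tiWK : W :&: 'ker_B f = 1.
  apply/trivgP/subsetP=> x /setIP[Wx /setIP[_ Kx]]; have Dx := subsetP sWD x Wx.
  by rewrite inE -(rootK x Wx) -fW // (kerP _ Dx Kx) expg1n.
rewrite dprodE //; apply/eqP; rewrite eqEsubset mulG_subG sWB subsetIl /=.
apply/subsetP=> x Bx; have Dx := subsetP sBD x Bx.
have Wfx : f x \in W by apply: (subsetP sfBW); apply: mem_morphim.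
set w := f x ^+ expg_invn W n.
have Ww : w \in W by rewrite groupX.
have Dw := subsetP sWD w Ww.
have fw : f w = f x by rewrite fW // -expgM mulnC expgM rootK.
rewrite -(mulKVg w x); apply: mem_mulg => //.
have Dwx : w^-1 * x \in D by rewrite groupM ?groupV.
apply/setIP; split; first by rewrite groupM ?groupV // (subsetP sWB).
apply/(kerP _ Dwx).
by rewrite morphM ?groupV // morphV // fw mulVg.
Qed.

Lemma cent_coprime_index_dprod (gT : finGroupType) (A G P B : {group gT}) :
  abelian A -> G \subset 'N(A) -> P \subset G -> coprime #|A| #|G : P| ->
  'C_A(G) \subset B -> B \subset 'C_A(P) ->
  exists K : {group gT}, K \subset B /\ 'C_A(G) \x K = B.
Proof.
move=> abA nAG sPG coAGP sWB sBC; have sBA := subset_trans sBC (subsetIl A 'C(P)).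
pose f := Morphism (rel_normM G P abA).
exists ('ker_B f)%G; split; first exact: subsetIl.
apply: power_retraction_dprod (abelianS sBA abA) sWB sBA _ _ _.
- apply/subsetP=> _ /morphimP[x _ Bx ->].
  exact: rel_norm_cent abA nAG sPG x (subsetP sBC x Bx).
- exact: rel_norm_cent_id abA nAG sPG.
- exact: coprimeSg (subsetIl A 'C(G)) coAGP.
Qed.

Lemma coset_injm_coprime {gT : finGroupType} {S N : {group gT}}
    (nNS : S \subset 'N(N)) :
  coprime #|S| #|N| -> 'injm (restrm nNS (coset N)).
Proof. by move=> coSN; rewrite ker_restrm ker_coset coprime_TIg. Qed.

Lemma injm_dprod_complement {gT rT : finGroupType} {D G W : {group gT}}
    {f : {morphism D >-> rT}} {Kf : {group rT}} :
  'injm f -> G \subset D -> W \subset G -> f @* W \x Kf = f @* G ->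
  exists K : {group gT}, K \subset G /\ W \x K = G.
Proof.
move=> injf sGD sWG dG; have sfGD : f @* G \subset f @* D := morphimS f sGD.
exists (invm injf @* Kf)%G; split.
  rewrite -(morphim_invm injf sGD) morphimS //.
  by case/dprodP: dG => _ <- _ _; apply: mulG_subr.
have := injm_dprod sfGD (injm_invm injf) dG.
by rewrite !morphim_invm // (subset_trans sWG).
Qed.

Lemma weakly_closedP {gT : finGroupType} {H S : {set gT}} {x : gT} :
  reflect (x \in S /\ {in H, forall g, x ^ g \in S -> x ^ g = x})
          (x \in weakly_closed_elts H S).
Proof.
rewrite inE; apply: (iffP andP) => [[Sx /forall_inP wcx] | [Sx wcx]].
  by split=> // g Hg Sxg; apply/eqP; apply: (implyP (wcx g Hg)).
by split=> //; apply/forall_inP=> g Hg; apply/implyP=> Sxg; rewrite wcx.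
Qed.

Lemma weakly_closed_sub_center {gT : finGroupType} {H S : {group gT}} :
  S \subset H -> weakly_closed_elts H S \subset 'Z(S).
Proof.
move=> sSH; apply/subsetP=> x /weakly_closedP[Sx wcx]; rewrite inE Sx.
apply/centP=> s Ss; apply/commgP/conjg_fixP.
by apply: wcx; rewrite ?groupJ ?(subsetP sSH).
Qed.

Lemma weakly_closed_conj_coset {gT : finGroupType} {H S N : {group gT}} {p : nat}
    {x g : gT} :
  p.-Sylow(H) S -> N <| H -> x \in weakly_closed_elts H S -> g \in H ->
  x ^ g \in N <*> S -> coset N (x ^ g) = coset N x.
Proof.
move=> sylS /andP[sNH nNH] Wx Hg NSxg; have sSH := pHall_sub sylS.
have nNS := subset_trans sSH nNH.
have [Sx wcx] := weakly_closedP Wx.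
have /setIP[_ cSx] := subsetP (weakly_closed_sub_center sSH) x Wx.
have sylS_NS : p.-Sylow(N <*> S) S.
  by apply: pHall_subl (joing_subr N S) _ sylS; rewrite join_subG sNH.
have pXg : p.-group <[x ^ g]>.
  by rewrite cycleJ pgroupJ (pgroupS _ (pHall_pgroup sylS)) ?cycle_subG.
have [y] := Sylow_Jsub sylS_NS (etrans (cycle_subG _ _) NSxg) pXg.
rewrite /= norm_joinEr // -cycleJ cycle_subG -conjgM => /mulsgP[n s Nn Ss ->] Sxgy.
have Hgns := groupM Hg (groupM (subsetP sNH n Nn) (subsetP sSH s Ss)).
have xgns : ((x ^ g) ^ n) ^ s = x by rewrite -!conjgM wcx.
have xgn : (x ^ g) ^ n = x.
  move/(congr1 (conjg^~ s^-1)): xgns.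
  by rewrite /= conjgK (conjg_cent cSx (groupVr Ss)).
have nNx := subsetP nNS x Sx.
have nNn : n^-1 \in 'N(N) by rewrite groupV (subsetP (normG N)).
rewrite -[x ^ g](conjgK n) xgn morphJ //.
by rewrite /= (coset_id (groupVr Nn)) conjg1.
Qed.

Section SylowModPcore.

Context {gT : finGroupType} {H S : {group gT}} {p : nat}.
Hypothesis sylS : p.-Sylow(H) S.

Local Notation N := 'O_p^'(H).

Let sSH : S \subset H := pHall_sub sylS.
Let nNH : H \subset 'N(N) := gFnorm _ _.
Let nNS : S \subset 'N(N) := subset_trans sSH nNH.
Let sylSb : p.-Sylow(H / N) (S / N) := morphim_pHall _ nNS sylS.
Let injNS : 'injm (restrm nNS (coset N)).
Proof. exact/coset_injm_coprime/(pnat_coprime (pHall_pgroup sylS))/pcore_pgroup. Qed.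

Lemma pseries2_sub_pcore_join : 'O_{p^', p}(H) \subset N <*> S.
Proof.
rewrite -(quotientSGK _ (joing_subl _ _)) ?(subset_trans (pseries_sub _ _)) //.
by rewrite quotient_pseries2 quotientYidl // pcore_sub_Hall.
Qed.

Lemma quotient_center_Sylow : 'Z(S) / N = 'Z(S / N).
Proof.
have := injm_center injNS (subxx S).
by rewrite !morphim_restrm setIid (setIidPr (center_sub S)).
Qed.

Lemma cent_pcore_center_sub : 'C_('Z('O_p(H / N)))(H / N) \subset 'Z(S) / N.
Proof.
rewrite quotient_center_Sylow; apply: setISS; last exact/centS/quotientS.
exact: subset_trans (center_sub _) (pcore_sub_Hall sylSb).
Qed.

Hypothesis sZL : 'Z(S) \subset 'O_{p^', p}(H).

Lemma quotient_center_sub_pcore_center : 'Z(S) / N \subset 'Z('O_p(H / N)).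
Proof.
have sZbO : 'Z(S) / N \subset 'O_p(H / N) by rewrite -quotient_pseries2 quotientS.
have cZbS : 'Z(S) / N \subset 'C(S / N) := quotient_cents _ (subsetIr S 'C(S)).
by rewrite {2}/center subsetI sZbO (subset_trans cZbS) ?centS ?pcore_sub_Hall.
Qed.

Lemma weakly_closed_coset_cent :
  weakly_closed_elts H S = 'Z(S) :&: coset N @*^-1 'C(H / N).
Proof.
apply/setP=> x; apply/idP/idP => [Wx | /setIP[Zx /morphpreP[nNx cHx]]].
  have Zx := subsetP (weakly_closed_sub_center sSH) x Wx.
  have nNx := subsetP nNS x (subsetP (center_sub S) x Zx).
  rewrite inE Zx; apply/morphpreP; split=> //.
  apply/centP=> _ /morphimP[g nNg Hg ->]; apply/commgP/conjg_fixP.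
  have Lxg : x ^ g \in 'O_{p^', p}(H).
    by rewrite memJ_norm ?(subsetP sZL) // (subsetP (normal_norm (pseries_normal _ H))).
  rewrite /= -morphJ //.
  have NSxg := subsetP pseries2_sub_pcore_join _ Lxg.
  exact: weakly_closed_conj_coset sylS (pcore_normal _ _) Wx Hg NSxg.
have Sx := subsetP (center_sub S) x Zx.
apply/weakly_closedP; split=> // g Hg Sxg; have nNg := subsetP nNH g Hg.
apply: (injmP injNS) => //=.
change (coset N (x ^ g) = coset N x); rewrite morphJ //.
exact: conjg_cent cHx (mem_quotient N Hg).
Qed.

Lemma quotient_center_cent_dprod :
  exists Kb : {group coset_of N}, Kb \subset 'Z(S) / N /\
    ('Z(S) / N :&: 'C(H / N)) \x Kb = 'Z(S) / N.
Proof.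
have eW : 'C_('Z('O_p(H / N)))(H / N) = 'Z(S) / N :&: 'C(H / N).
  apply/eqP; rewrite eqEsubset (setSI _ quotient_center_sub_pcore_center) andbT.
  by rewrite subsetI cent_pcore_center_sub subsetIr.
rewrite -eW; apply: cent_coprime_index_dprod.
- exact: center_abelian.
- exact: normal_norm (char_normal_trans (center_char _) (pcore_normal _ _)).
- exact: quotientS sSH.
- have pA : p.-group 'Z('O_p(H / N)) := pgroupS (center_sub _) (pcore_pgroup _ _).
  by case/and3P: sylSb => _ _; apply: pnat_coprime pA.
- exact: cent_pcore_center_sub.
- rewrite subsetI quotient_center_sub_pcore_center.
  exact: quotient_cents (subsetIr S 'C(S)).
Qed.

End SylowModPcore.

Theorem proposition2p2 (gT : finGroupType) (H S : {group gT}) (p : nat) :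
  prime p -> S \in 'Syl_p(H) ->
  'Z(S) \subset 'O_{p^', p}(H) ->
  exists K : {group gT},
    K \subset 'Z(S) /\ weakly_closed_elts H S \x K = 'Z(S).
Proof.
move=> _; rewrite inE => sylS sZL. (* [p] need not be prime. *)
have nNS : S \subset 'N('O_p^'(H)) := subset_trans (pHall_sub sylS) (gFnorm _ _).
have injNS : 'injm (restrm nNS (coset 'O_p^'(H))).
  exact/coset_injm_coprime/(pnat_coprime (pHall_pgroup sylS))/pcore_pgroup.
have [Kb [_ dKb]] := quotient_center_cent_dprod sylS sZL.
rewrite (weakly_closed_coset_cent sylS sZL).
apply: (injm_dprod_complement (Kf := Kb)) injNS (center_sub S) (subsetIl _ _) _.
by rewrite !morphim_restrm setIA !(setIidPr (center_sub S)) morphim_setIpre.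
Qed.
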